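(* If $P_2$ is strictly increasing on $[0,1]$, then there exists at most one sequence $T=(T_k)\in\mathcal{T}$ satisfying $$\exp\left(\int_0^x\log\bigl(1-P_1(T_k(\alpha))\bigr)\,d\alpha\right)+\prod_{i=1}^k\bigl(1-P_2(T_i(x))\bigr)=1\qquad\text{for all }x\ge0,\ k\in\mathbb{N}.$$
   Context: $P_1,P_2:[0,1]\to[0,1]$ are continuously differentiable, increasing, $P_j(0)=0$, $P_j(1)=1$, $P_j(t)<1$ for $t<1$. The class $\mathcal{T}$: all sequences $T=(T_1,T_2,\dots)$ of functions on $[0,\infty)$ such that each $T_k$ is continuous on $[0,\infty)$ and continuously differentiable on $(0,\infty)$; $0<T_k(x)\le1$; $T_k'(x)<0$ and $T_{k+1}(x)<T_k(x)$ for $x>0$; $T_k(0)=1$. *)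

From Stdlib Require Import Reals Lra.
Open Scope R_scope.

Definition cont_on_closed (f : R -> R) (a b : R) : Prop :=
  forall x, a <= x <= b ->
    limit1_in f (fun y => a <= y <= b) (f x) x.

Definition deriv_within (f : R -> R) (a b x l : R) : Prop :=
  limit1_in (fun h => (f (x + h) - f x) / h)
            (fun h => h <> 0 /\ a <= x + h <= b) l 0.

Definition admissible_P (P : R -> R) : Prop :=
  (forall t, 0 <= t <= 1 -> 0 <= P t <= 1) /\
  (exists dP : R -> R,
      (forall x, 0 <= x <= 1 -> deriv_within P 0 1 x (dP x)) /\
      cont_on_closed dP 0 1) /\
  (forall s t, 0 <= s <= 1 -> 0 <= t <= 1 -> s <= t -> P s <= P t) /\
  P 0 = 0 /\ P 1 = 1 /\
  (forall t, 0 <= t < 1 -> P t < 1).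

Definition strictly_increasing_01 (P : R -> R) : Prop :=
  forall s t, 0 <= s <= 1 -> 0 <= t <= 1 -> s < t -> P s < P t.

(* The class \mathcal{T}.  The sequence (T_1, T_2, ...) is represented by
   T : nat -> R -> R with T n standing for T_{n+1}. *)
Definition in_class_T (T : nat -> R -> R) : Prop :=
  forall n : nat,
    (forall x, 0 <= x -> limit1_in (T n) (fun y => 0 <= y) (T n x) x) /\
    (exists dT : R -> R,
        (forall x, 0 < x -> derivable_pt_lim (T n) x (dT x)) /\
        (forall x, 0 < x -> continuity_pt dT x) /\
        (forall x, 0 < x -> dT x < 0)) /\
    (forall x, 0 <= x -> 0 < T n x <= 1) /\
    (forall x, 0 < x -> T (S n) x < T n x) /\
    T n 0 = 1.

(* "exp (int_0^x f)" equals L, the integral being improper at 0: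
   exp (int_e^x f) -> L as e -> 0+ (with exp(-oo) = 0 convention);
   for x = 0 the integral is 0. *)
Definition exp_int_from0 (f : R -> R) (x L : R) : Prop :=
  (x = 0 /\ L = 1) \/
  (0 < x /\
   forall eps, 0 < eps -> exists delta, 0 < delta /\
     forall e, 0 < e < delta -> e <= x ->
       exists pr : Riemann_integrable f e x,
         Rabs (exp (RiemannInt pr) - L) < eps).

(* The functional equation, for all x >= 0 and k >= 1 (k = n+1):
   exp(int_0^x log(1 - P1(T_k a)) da) + prod_{i=1}^k (1 - P2(T_i x)) = 1. *)
Definition solves_eq (P1 P2 : R -> R) (T : nat -> R -> R) : Prop :=
  forall (n : nat) (x : R), 0 <= x ->
    exp_int_from0 (fun a => ln (1 - P1 (T n a))) x
      (1 - prod_f_R0 (fun i => 1 - P2 (T i x)) n).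

From Stdlib Require Import Reals Lra Lia Arith.
Open Scope R_scope.

(** Suppose T and T' agree below level k.  Then T_k and T'_k solve the same
    single-level equation  F_u(x) = 1 - c(x) (1 - P2(u x)),  where
    F_u(x) = exp (int_0^x ln (1 - P1 (u a)) da)  and  c(x) > 0  is the common
    product of the lower factors.  Two such solutions cannot cross: if
    u(x0) > v(x0), take the last point a < x0 that is 0 or where u <= v.
    On (a, x0] the integrand for u is below that for v, and at a the right
    sides compare as u(a) <= v(a), so F_u(x0) <= F_v(x0); strict monotonicity
    of P2 gives the opposite strict inequality at x0. *)

Lemma exp_le_mono x y : x <= y -> exp x <= exp y.
Proof.
  intros Hxy; destruct (Rle_lt_or_eq_dec _ _ Hxy) as [Hlt | ->];
    [left; apply exp_increasing, Hlt | lra].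
Qed.

Lemma ln_le_mono x y : 0 < x -> x <= y -> ln x <= ln y.
Proof.
  intros Hx Hxy; destruct (Rle_lt_or_eq_dec _ _ Hxy) as [Hlt | ->];
    [left; apply ln_increasing; assumption | lra].
Qed.

Lemma common_small_point d1 d2 :
  0 < d1 -> 0 < d2 -> exists e, 0 < e < d1 /\ e < d2.
Proof.
  intros H1 H2; exists (Rmin d1 d2 / 2).
  pose proof (Rmin_l d1 d2); pose proof (Rmin_r d1 d2);
    pose proof (Rmin_pos d1 d2 H1 H2); lra.
Qed.

Lemma exp_int_from0_at0 f L : exp_int_from0 f 0 L -> L = 1.
Proof. intros [[_ HL] | [Hx _]]; [exact HL | lra]. Qed.

Lemma exp_int_from0_approx f x L :
  0 < x -> exp_int_from0 f x L ->
  forall eps, 0 < eps -> exists delta, 0 < delta <= x /\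
    forall e, 0 < e < delta ->
      exists pr : Riemann_integrable f e x, Rabs (exp (RiemannInt pr) - L) < eps.
Proof.
  intros Hx [[Hx0 _] | [_ Happrox]] eps Heps; [lra |].
  destruct (Happrox eps Heps) as [d [Hd Hd_approx]].
  pose proof (Rmin_l d x); pose proof (Rmin_r d x).
  exists (Rmin d x); split.
  - split; [apply Rmin_pos |]; lra.
  - intros e He; apply Hd_approx; lra.
Qed.

(** A limit of exponentials is nonnegative. *)
Lemma exp_int_from0_nonneg f x L : 0 <= x -> exp_int_from0 f x L -> 0 <= L.
Proof.
  intros Hx HL.
  destruct (Req_dec x 0) as [-> | Hx0]; [rewrite (exp_int_from0_at0 f L HL); lra |].
  apply Rnot_lt_le; intro Hneg.
  destruct (exp_int_from0_approx f x L ltac:(lra) HL (- L) ltac:(lra))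
    as [d [Hd Hd_approx]].
  destruct (Hd_approx (d / 2) ltac:(lra)) as [pr Hpr].
  pose proof (exp_pos (RiemannInt pr)); apply Rabs_def2 in Hpr; lra.
Qed.

Lemma exp_int_from0_split f a x La L :
  0 < a < x -> exp_int_from0 f a La -> exp_int_from0 f x L ->
  exists pr : Riemann_integrable f a x, L = La * exp (RiemannInt pr).
Proof.
  intros Hax HLa HL.
  destruct (exp_int_from0_approx f x L ltac:(lra) HL 1 ltac:(lra)) as [d0 [Hd0 Hd0_approx]].
  destruct (common_small_point d0 a ltac:(lra) ltac:(lra)) as [e0 [He0 He0a]].
  destruct (Hd0_approx e0 He0) as [pr0 _].
  exists (RiemannInt_P23 pr0 (conj (Rlt_le _ _ He0a) (Rlt_le _ _ (proj2 Hax)))).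
  set (pr := RiemannInt_P23 _ _); set (E := exp (RiemannInt pr)).
  assert (HE : 0 < E) by apply exp_pos.
  apply cond_eq; intros eps Heps.
  set (eta := eps / (1 + E)).
  assert (Heta : 0 < eta) by (apply Rdiv_lt_0_compat; lra).
  destruct (exp_int_from0_approx f x L ltac:(lra) HL eta Heta) as [dx [Hdx Hx_approx]].
  destruct (exp_int_from0_approx f a La ltac:(lra) HLa eta Heta) as [da [Hda Ha_approx]].
  destruct (common_small_point dx da ltac:(lra) ltac:(lra)) as [e [He Hea]].
  destruct (Hx_approx e He) as [pr_ex Hex].
  destruct (Ha_approx e ltac:(lra)) as [pr_ea Hea_approx].
  (* Chasles: exp (int_e^x f) = exp (int_e^a f) * E. *)
  assert (Hchasles : exp (RiemannInt pr_ex) = exp (RiemannInt pr_ea) * E)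
    by (rewrite <- (RiemannInt_P26 pr_ea pr pr_ex); apply exp_plus).
  assert (Hdecomp : L - La * E =
            - (exp (RiemannInt pr_ex) - L) + (exp (RiemannInt pr_ea) - La) * E)
    by (rewrite Hchasles; ring).
  rewrite Hdecomp.
  eapply Rle_lt_trans; [apply Rabs_triang |].
  rewrite Rabs_Ropp, Rabs_mult, (Rabs_right E) by lra.
  assert (Rabs (exp (RiemannInt pr_ea) - La) * E < eta * E)
    by (apply Rmult_lt_compat_r; lra).
  assert (eta * (1 + E) = eps) by (unfold eta; field; lra).
  lra.
Qed.

Lemma exp_int_from0_le f g a x Lfa Lga Lf Lg :
  0 <= a < x -> (forall t, a < t <= x -> f t <= g t) -> Lfa <= Lga ->
  exp_int_from0 f a Lfa -> exp_int_from0 g a Lga ->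
  exp_int_from0 f x Lf -> exp_int_from0 g x Lg -> Lf <= Lg.
Proof.
  intros Hax Hfg HLa Hfa Hga Hf Hg.
  destruct (Req_dec a 0) as [-> | Ha0].
  - apply Rle_plus_epsilon; intros eps Heps.
    destruct (exp_int_from0_approx f x Lf ltac:(lra) Hf (eps / 2) ltac:(lra))
      as [df [Hdf Hf_approx]].
    destruct (exp_int_from0_approx g x Lg ltac:(lra) Hg (eps / 2) ltac:(lra))
      as [dg [Hdg Hg_approx]].
    destruct (common_small_point df dg ltac:(lra) ltac:(lra)) as [e [He Heg]].
    destruct (Hf_approx e He) as [prf Hprf].
    destruct (Hg_approx e ltac:(lra)) as [prg Hprg].
    assert (Hint : RiemannInt prf <= RiemannInt prg)
      by (apply RiemannInt_P19; [lra | intros t Ht; apply Hfg; lra]).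
    apply exp_le_mono in Hint.
    apply Rabs_def2 in Hprf; apply Rabs_def2 in Hprg; lra.
  - destruct (exp_int_from0_split f a x Lfa Lf ltac:(lra) Hfa Hf) as [prf ->].
    destruct (exp_int_from0_split g a x Lga Lg ltac:(lra) Hga Hg) as [prg ->].
    assert (Hint : RiemannInt prf <= RiemannInt prg)
      by (apply RiemannInt_P19; [lra | intros t Ht; apply Hfg; lra]).
    apply exp_le_mono in Hint.
    pose proof (exp_pos (RiemannInt prf)).
    pose proof (exp_int_from0_nonneg g a Lga ltac:(lra) Hga).
    nra.
Qed.

Lemma continuity_pt_pos_nbhd g a :
  continuity_pt g a -> 0 < g a ->
  exists d, 0 < d /\ forall t, Rabs (t - a) < d -> 0 < g t.
Proof.
  intros Hg Hpos.
  destruct (Hg (g a) Hpos) as [d [Hd Hnear]].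
  exists d; split; [lra |]; intros t Ht.
  destruct (Req_dec t a) as [-> | Hta]; [lra |].
  assert (Hclose : Rabs (g t - g a) < g a)
    by (apply (Hnear t); split; [split; [exact I | congruence] | exact Ht]).
  apply Rabs_def2 in Hclose; lra.
Qed.

(** Last crossing: if [g] is continuous on [(0, x0]] and [g x0 > 0], there is
    a last point [a < x0] which is [0] or where [g <= 0], after which [g > 0].
    It is the supremum of [{0} U {s in (0, x0] | g s <= 0}]. *)
Lemma last_crossing g x0 :
  0 < x0 -> (forall t, 0 < t <= x0 -> continuity_pt g t) -> 0 < g x0 ->
  exists a, 0 <= a < x0 /\ (a = 0 \/ g a <= 0) /\
            forall t, a < t <= x0 -> 0 < g t.
Proof.
  intros Hx0 Hcont Hgx0.
  set (S := fun s => 0 <= s <= x0 /\ (s = 0 \/ g s <= 0)).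
  destruct (completeness S) as [a [Hub Hlub]].
  - exists x0; intros s Hs; apply Hs.
  - exists 0; split; [lra | left; reflexivity].
  - assert (Ha0 : 0 <= a) by (apply Hub; split; [lra | left; reflexivity]).
    assert (Hax : a <= x0) by (apply Hlub; intros s Hs; apply Hs).
    assert (Habove : forall t, a < t <= x0 -> 0 < g t).
    { intros t Ht; apply Rnot_le_lt; intro Hgt.
      assert (t <= a) by (apply Hub; split; [lra | right; exact Hgt]); lra. }
    assert (Hat : a = 0 \/ g a <= 0).
    { destruct (Req_dec a 0) as [| Hapos]; [left; assumption | right].
      apply Rnot_lt_le; intro Hga.
      destruct (continuity_pt_pos_nbhd g a (Hcont a ltac:(lra)) Hga) as [d [Hd Hnear]].
      pose proof (Rmin_l d a); pose proof (Rmin_r d a);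
        pose proof (Rmin_pos d a Hd ltac:(lra)).
      (* [g > 0] on [(a - min d a, a]], so [a - min d a] bounds [S]. *)
      assert (Hsmaller : is_upper_bound S (a - Rmin d a)).
      { intros s [Hs Hgs]; apply Rnot_lt_le; intro Hs_close.
        assert (s <= a) by (apply Hub; split; assumption).
        assert (0 < g s) by (apply Hnear; rewrite Rabs_left1; lra).
        destruct Hgs; lra. }
      pose proof (Hlub _ Hsmaller); lra. }
    exists a; split; [| split; assumption].
    split; [assumption |].
    destruct (Rle_lt_or_eq_dec _ _ Hax) as [| ->]; [assumption |].
    destruct Hat; lra.
Qed.

Lemma strictly_increasing_01_le P s t :
  strictly_increasing_01 P -> 0 <= s <= 1 -> 0 <= t <= 1 -> s <= t -> P s <= P t.
Proof.
  intros HP Hs Ht Hst; destruct (Rle_lt_or_eq_dec _ _ Hst) as [Hlt | ->];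
    [left; apply HP; assumption | lra].
Qed.

(** The equation at a single level [k]: [u] plays [T_k] and [c x] the
    product [prod_{i<k} (1 - P2 (T_i x))] of the lower levels. *)
Definition solves_level (P1 P2 c u : R -> R) : Prop :=
  forall x, 0 <= x ->
    exp_int_from0 (fun a => ln (1 - P1 (u a))) x (1 - c x * (1 - P2 (u x))).

Section LevelComparison.

Variables P1 P2 c u v : R -> R.
Hypothesis HP1 : admissible_P P1.
Hypothesis HP2 : strictly_increasing_01 P2.
Hypothesis Hc : forall x, 0 < x -> 0 < c x.
Hypothesis Hu_sol : solves_level P1 P2 c u.
Hypothesis Hv_sol : solves_level P1 P2 c v.
Hypothesis Hu_cont : forall x, 0 < x -> continuity_pt u x.
Hypothesis Hv_cont : forall x, 0 < x -> continuity_pt v x.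
Hypothesis Hu_range : forall x, 0 < x -> 0 < u x < 1.
Hypothesis Hv_range : forall x, 0 < x -> 0 < v x < 1.

(** Two solutions of the same level equation cannot cross: at the last point
    [a] before [x0] where [u <= v], the left side of the equation for [u] is
    below that for [v]; on [(a, x0]] we have [v < u], so the integrand for [u]
    is smaller and the comparison persists up to [x0], whereas strict
    monotonicity of [P2] reverses it at [x0]. *)
Lemma level_comparison x : 0 < x -> u x <= v x.
Proof.
  destruct HP1 as [_ [_ [HP1_mono [_ [_ HP1_lt1]]]]].
  intros Hx; apply Rnot_lt_le; intro Hvu.
  destruct (last_crossing (fun t => u t - v t) x Hx
              (fun t Ht => continuity_pt_minus u v t
                             (Hu_cont t ltac:(lra)) (Hv_cont t ltac:(lra)))
              ltac:(lra))
    as [a [Hax [Hcross Habove]]].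
  assert (Hintegrand : forall t, a < t <= x ->
            ln (1 - P1 (u t)) <= ln (1 - P1 (v t))).
  { intros t Ht; specialize (Habove t Ht); simpl in Habove.
    pose proof (Hu_range t ltac:(lra)); pose proof (Hv_range t ltac:(lra)).
    assert (P1 (v t) <= P1 (u t)) by (apply HP1_mono; lra).
    assert (P1 (u t) < 1) by (apply HP1_lt1; lra).
    apply ln_le_mono; lra. }
  assert (Hstart : 1 - c a * (1 - P2 (u a)) <= 1 - c a * (1 - P2 (v a))).
  { destruct (Req_dec a 0) as [-> | Ha0].
    - rewrite (exp_int_from0_at0 _ _ (Hu_sol 0 ltac:(lra))),
              (exp_int_from0_at0 _ _ (Hv_sol 0 ltac:(lra))); lra.
    - assert (Ha : 0 < a) by lra.
      assert (Hle : u a - v a <= 0) by (destruct Hcross; [contradiction | assumption]).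
      pose proof (Hu_range a Ha); pose proof (Hv_range a Ha); pose proof (Hc a Ha).
      assert (P2 (u a) <= P2 (v a))
        by (apply strictly_increasing_01_le; [assumption | lra ..]).
      nra. }
  assert (Hend := exp_int_from0_le _ _ a x _ _ _ _ Hax Hintegrand Hstart
                    (Hu_sol a ltac:(lra)) (Hv_sol a ltac:(lra))
                    (Hu_sol x ltac:(lra)) (Hv_sol x ltac:(lra))).
  pose proof (Hu_range x Hx); pose proof (Hv_range x Hx); pose proof (Hc x Hx).
  assert (P2 (v x) < P2 (u x)) by (apply HP2; lra).
  nra.
Qed.

End LevelComparison.

Lemma level_unique P1 P2 c u v :
  admissible_P P1 -> strictly_increasing_01 P2 ->
  (forall x, 0 < x -> 0 < c x) ->
  solves_level P1 P2 c u -> solves_level P1 P2 c v ->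
  (forall x, 0 < x -> continuity_pt u x) -> (forall x, 0 < x -> continuity_pt v x) ->
  (forall x, 0 < x -> 0 < u x < 1) -> (forall x, 0 < x -> 0 < v x < 1) ->
  u 0 = v 0 -> forall x, 0 <= x -> u x = v x.
Proof.
  intros HP1 HP2 Hc Hu Hv Hu_cont Hv_cont Hu_range Hv_range H0 x Hx.
  destruct (Rle_lt_or_eq_dec _ _ Hx) as [Hpos | <-]; [| exact H0].
  apply Rle_antisym; eapply level_comparison; eassumption.
Qed.

Lemma class_T_continuous T n x : in_class_T T -> 0 < x -> continuity_pt (T n) x.
Proof.
  intros HT Hx; destruct (HT n) as [_ [[dT [Hderiv _]] _]].
  apply derivable_continuous_pt; exists (dT x); apply Hderiv, Hx.
Qed.

(** Each [T_k] takes values in [(0, 1)] on [(0, oo)]: by the mean value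
    theorem on [[x/2, x]] and [T_k' < 0], [T_k x < T_k (x/2) <= 1]. *)
Lemma class_T_range T n x : in_class_T T -> 0 < x -> 0 < T n x < 1.
Proof.
  intros HT Hx; destruct (HT n) as [_ [[dT [Hderiv [_ Hneg]]] [Hbounds _]]].
  destruct (MVT_cor2 (T n) dT (x / 2) x ltac:(lra)
              (fun t Ht => Hderiv t ltac:(lra))) as [t [Hmvt Ht]].
  pose proof (Hneg t ltac:(lra)); pose proof (Hbounds x ltac:(lra));
    pose proof (Hbounds (x / 2) ltac:(lra)).
  assert (dT t * (x - x / 2) < 0) by (apply Rmult_neg_pos; lra).
  lra.
Qed.

Lemma class_T_factor_pos P2 T i x :
  admissible_P P2 -> in_class_T T -> 0 < x -> 0 < 1 - P2 (T i x).
Proof.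
  intros [_ [_ [_ [_ [_ HP2_lt1]]]]] HT Hx.
  pose proof (class_T_range T i x HT Hx).
  assert (P2 (T i x) < 1) by (apply HP2_lt1; lra); lra.
Qed.

Definition prod_below (F : nat -> R) (n : nat) : R :=
  match n with O => 1 | S m => prod_f_R0 F m end.

Lemma prod_f_R0_last F n : prod_f_R0 F n = prod_below F n * F n.
Proof. destruct n; simpl; ring. Qed.

Lemma prod_below_ext F G n :
  (forall i, (i < n)%nat -> F i = G i) -> prod_below F n = prod_below G n.
Proof.
  destruct n as [| m]; intros HFG; [reflexivity | simpl].
  induction m as [| m IHm]; simpl.
  - apply HFG; lia.
  - rewrite IHm by (intros; apply HFG; lia); rewrite (HFG (S m)) by lia; reflexivity.
Qed.

Lemma prod_below_pos F n : (forall i, (i < n)%nat -> 0 < F i) -> 0 < prod_below F n.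
Proof.
  destruct n as [| m]; intros HF; simpl; [lra |].
  induction m as [| m IHm]; simpl.
  - apply HF; lia.
  - apply Rmult_lt_0_compat; [apply IHm; intros; apply HF; lia | apply HF; lia].
Qed.

(** Uniqueness by strong induction on the level [n]: once [T_i = T'_i] for
    all [i < n], the level-[n] equations of [T] and [T'] share the coefficient
    [c x = prod_{i<n} (1 - P2 (T_i x))], so [level_unique] applies. *)
Theorem corollary3 (P1 P2 : R -> R) :
  admissible_P P1 -> admissible_P P2 ->
  strictly_increasing_01 P2 ->
  forall T T' : nat -> R -> R,
    in_class_T T -> solves_eq P1 P2 T ->
    in_class_T T' -> solves_eq P1 P2 T' ->
    forall (n : nat) (x : R), 0 <= x -> T n x = T' n x.
Proof.
  intros HP1 HP2 HP2_strict T T' HT HT_sol HT' HT'_sol n.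
  induction n as [n IH] using lt_wf_ind.
  set (c := fun x => prod_below (fun i => 1 - P2 (T i x)) n).
  assert (Hc_shared : forall x, 0 <= x ->
            prod_below (fun i => 1 - P2 (T' i x)) n = c x).
  { intros x Hx; apply prod_below_ext; intros i Hi; rewrite (IH i Hi x Hx); reflexivity. }
  apply (level_unique P1 P2 c).
  - exact HP1.
  - exact HP2_strict.
  - intros x Hx; apply prod_below_pos; intros i _; apply class_T_factor_pos; assumption.
  - intros x Hx; unfold c; rewrite <- prod_f_R0_last; apply HT_sol, Hx.
  - intros x Hx; rewrite <- (Hc_shared x Hx), <- prod_f_R0_last; apply HT'_sol, Hx.
  - intros x; apply class_T_continuous, HT.
  - intros x; apply class_T_continuous, HT'.
  - intros x; apply class_T_range, HT.
  - intros x; apply class_T_range, HT'.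
  - destruct (HT n) as [_ [_ [_ [_ ->]]]]; destruct (HT' n) as [_ [_ [_ [_ ->]]]].
    reflexivity.
Qed.
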